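(* Let $m\ge1$, and for $k=1,\dots,m$ let $0<\lambda_k\le1$, $A_k\ge0$, $p_k\ge1$. Suppose $f\in C^1([0,\infty))$ and $g_k\in L^{p_k}_{loc}([0,\infty))$ satisfy $f\ge0$, $g_k\ge0$, \[ f'(t)\le\sum_{k=1}^m f(t)^{1-\lambda_k}g_k(t),\qquad \|g_k\|_{L^{p_k}([0,t])}\lesssim\langle t\rangle^{A_k} \] for all $t\ge0$. Then $f(t)\lesssim\langle t\rangle^{\Gamma}$ for all $t\ge0$, where $\Gamma=\max_{1\le k\le m}\frac{A_k+1/p_k'}{\lambda_k}$.
   Context: $\langle t\rangle=(1+|t|^2)^{1/2}$; $p_k'$ is the Hölder conjugate exponent of $p_k$ ($1/p_k+1/p_k'=1$). Implicit constants are independent of $t$. *)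

From HB Require Import structures.
From mathcomp Require Import all_boot all_order all_algebra.
From mathcomp Require Import all_classical all_reals all_analysis.
Set Implicit Arguments. Unset Strict Implicit. Unset Printing Implicit Defensive.
Import Order.TTheory GRing.Theory Num.Theory.
Import numFieldNormedType.Exports.
Local Open Scope ring_scope.
Local Open Scope classical_set_scope.

Definition jbr {R : realType} (t : R) : R := Num.sqrt (1 + `|t| ^+ 2).

Definition LpNorm0t {R : realType} (p : R) (g : R -> R) (t : R) : \bar R :=
  Lnorm (@lebesgue_measure R) (p%:E) (fun x => (\1_(`[0, t]%classic) x * g x)%:E).

(* Hoelder conjugate reciprocal 1/p' = 1 - 1/p (= 0 when p = 1, i.e. p' = oo) *)
Definition inv_conj {R : realType} (p : R) : R := 1 - p^-1.

Definition C1_halfline {R : realType} (f f' : R -> R) : Prop :=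
  (forall t : R, 0 < t -> is_derive t 1 f (f' t)) /\
  (h^-1 * (f h - f 0) @[h --> (0:R)^'+] --> f' 0) /\
  {within `[0, +oo[, continuous f'}.

From HB Require Import structures.
From mathcomp Require Import all_boot all_order all_algebra.
From mathcomp Require Import all_classical all_reals all_analysis.
From mathcomp Require Import ring.
Set Implicit Arguments.
Unset Strict Implicit.
Import Order.TTheory GRing.Theory Num.Theory.
Import numFieldNormedType.Exports.
Local Open Scope ring_scope.
Local Open Scope classical_set_scope.

(* Fix t >= 0 and let c maximise f on [0, t], X := f c.  Integrating
   f' <= sum_k f^(1 - lam_k) g_k over [0, c] and bounding f^(1 - lam_k) by
   X^(1 - lam_k) gives X <= f 0 + sum_k X^(1 - lam_k) b_k, where by Hoelder
   b_k = t^(1/p_k') ||g_k||_{L^p_k(0,t)} <~ <t>^(A_k + 1/p_k').  Such an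
   inequality forces X <= (m+1) f 0 + sum_k ((m+1) b_k)^(1/lam_k), since
   otherwise each of the m + 1 terms on its right-hand side would be smaller
   than X / (m+1); and ((m+1) b_k)^(1/lam_k) <~ <t>^Gamma. *)

Section PowerInequalities.
Variable R : realType.

Lemma powR_subr_mul_le (l b X : R) : 0 < l -> 0 <= b -> 0 < X ->
  b `^ l^-1 <= X -> X `^ (1 - l) * b <= X.
Proof.
move=> l_gt0 b_ge0 X_gt0 bX.
have b_le : b <= X `^ l.
  have := @ge0_ler_powR R l (ltW l_gt0) (b `^ l^-1) X.
  rewrite !nnegrE powR_ge0 (ltW X_gt0) -powRrM mulVf ?gt_eqF // powRr1 //.
  by apply.
have XE : X `^ (1 - l) * X `^ l = X.
  by rewrite -powRD ?(gt_eqF X_gt0) ?implybT // subrK powRr1 // ltW.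
by rewrite -[leRHS]XE ler_wpM2l ?powR_ge0.
Qed.

Lemma ler_sum_powR_absorb (n : nat) (lam b : 'I_n -> R) (a X : R) :
  (forall k, 0 < lam k) -> (forall k, 0 <= b k) -> 0 <= a ->
  X <= a + \sum_(k < n) X `^ (1 - lam k) * b k ->
  X <= n.+1%:R * a + \sum_(k < n) (n.+1%:R * b k) `^ (lam k)^-1.
Proof.
move=> lam_gt0 b_ge0 a_ge0 X_le; rewrite leNgt; apply/negP => X_gt.
set B := \sum_(k < n) _ in X_gt.
have B_ge0 : 0 <= B by apply: sumr_ge0 => k _; exact: powR_ge0.
have X_gt0 : 0 < X by apply: le_lt_trans X_gt; rewrite addr_ge0 ?mulr_ge0.
have a_lt : a < X / n.+1%:R.
  by rewrite ltr_pdivlMr // mulrC; apply: le_lt_trans X_gt; rewrite lerDl.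
have term_le k : X `^ (1 - lam k) * b k <= X / n.+1%:R.
  rewrite ler_pdivlMr // -mulrA [b k * _]mulrC.
  apply: powR_subr_mul_le; rewrite ?mulr_ge0 //.
  apply: le_trans (ltW X_gt); rewrite -[leLHS]add0r lerD ?mulr_ge0 //.
  by rewrite /B (bigD1 k) //= lerDl sumr_ge0 // => i _; exact: powR_ge0.
have sum_le : \sum_(k < n) X `^ (1 - lam k) * b k <= n%:R * (X / n.+1%:R).
  apply: le_trans (ler_sum _ (fun k _ => term_le k)) _.
  by rewrite sumr_const card_ord mulr_natl.
suff : a + \sum_(k < n) X `^ (1 - lam k) * b k < X by rewrite ltNge X_le.
have XE : X = X / n.+1%:R + n%:R * (X / n.+1%:R).
  by rewrite -natr1; field; rewrite natr1 gt_eqF.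
by rewrite [ltRHS]XE ltr_leD.
Qed.

Lemma powR_mul_le_powR (J c e l G : R) : 1 <= J -> 0 <= c -> 0 < l -> e / l <= G ->
  (c * J `^ e) `^ l^-1 <= c `^ l^-1 * J `^ G.
Proof.
move=> J_ge1 c_ge0 l_gt0 elG.
rewrite powRM ?powR_ge0 // -powRrM ler_wpM2l ?powR_ge0 //.
exact: ler_powR.
Qed.

End PowerInequalities.

Section JapaneseBracket.
Variable R : realType.

Lemma jbr_ge1 (t : R) : 1 <= jbr t.
Proof. by rewrite /jbr -{1}sqrtr1 ler_sqrt ?lerDl ?addr_ge0 ?exprn_ge0. Qed.

Lemma ler_norm_jbr (t : R) : `|t| <= jbr t.
Proof.
by rewrite /jbr -{1}(normr_id t) -sqrtr_sqr ler_sqrt ?lerDr ?addr_ge0 ?exprn_ge0.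
Qed.

End JapaneseBracket.

Section HoelderOnInterval.
Variable R : realType.
Local Notation mu := (@lebesgue_measure R).

Lemma Lnorm_indic_itv0 (q t : R) : 0 < q -> 0 <= t ->
  Lnorm mu q%:E (EFin \o \1_`[0, t]) = (t `^ q^-1)%:E.
Proof.
move=> q_gt0 t_ge0; rewrite Lnorm.unlock /=.
have -> : (\int[mu]_x (`|\1_`[0, t] x| `^ q)%:E = \int[mu]_x (\1_`[0, t] x)%:E)%E.
  apply: eq_integral => x _; rewrite indicE; case: (x \in _) => /=.
    by rewrite normr1 powR1.
  by rewrite normr0 powR0 ?gt_eqF.
rewrite integral_indic // setIT [X in (X `^ _)%E]lebesgue_measure_itv /= lte_fin.
have [t_gt0|t_le0] := ltP 0 t; first by rewrite oppr0 addr0 poweR_EFin.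
have -> : t = 0 by apply/le_anti; rewrite t_le0 t_ge0.
by rewrite poweR0r ?powR0 // invr_eq0 gt_eqF.
Qed.

Lemma integral_itv0_le_holder (g : R -> R) (p t : R) : 1 <= p -> 0 <= t ->
  measurable_fun `[0, t] g -> {in `[0, t], forall x, 0 <= g x} ->
  (\int[mu]_(x in `[0%R, t]) (g x)%:E <= (t `^ inv_conj p)%:E * LpNorm0t p g t)%E.
Proof.
move=> p_ge1 t_ge0 mg g_ge0.
have mD : measurable (`[0, t] : set R) by exact: measurable_itv.
pose F x := \1_`[0, t] x * g x.
have FE : F = g \_ `[0, t].
  apply/funext => x; rewrite /F patchE indicE.
  by case: (x \in _); rewrite ?mul1r ?mul0r.
have mF : measurable_fun setT F by rewrite FE; exact/(measurable_restrictT _ mD).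
have -> : (\int[mu]_(x in `[0%R, t]) (g x)%:E = Lnorm mu 1 (EFin \o F))%E.
  rewrite Lnorm1 [LHS]integral_mkcond; apply: eq_integral => x _.
  rewrite FE /= !patchE; case: ifPn => [xD|_]; last by rewrite normr0.
  by rewrite ger0_norm // g_ge0.
have [->|p_neq1] := eqVneq p 1.
  by rewrite /inv_conj invr1 subrr powRr0 mul1e.
have p_gt0 : 0 < p := lt_le_trans ltr01 p_ge1.
have ic_gt0 : 0 < inv_conj p.
  by rewrite subr_gt0 invf_lt1 // lt_neqAle eq_sym p_neq1 p_ge1.
have pq : p^-1 + (inv_conj p)^-1^-1 = 1 by rewrite invrK /inv_conj addrC subrK.
have mI : measurable_fun setT (\1_`[0, t] : R -> R).
  exact: measurable_realfun.measurable_indic.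
have q_gt0 : 0 < (inv_conj p)^-1 by rewrite invr_gt0.
have := hoelder.hoelder mu mF mI p_gt0 q_gt0 pq.
have -> : (F \* \1_`[0, t])%R = F.
  apply/funext => x; rewrite /F /= indicE.
  by case: (x \in _); rewrite ?mulr1 ?mulr0 ?mul0r.
by rewrite Lnorm_indic_itv0 ?invr_gt0 // invrK muleC.
Qed.

Lemma integral_itv0_le_jbr_powR (g : R -> R) (p A C t : R) : 1 <= p -> 0 <= t ->
  measurable_fun `[0, t] g -> {in `[0, t], forall x, 0 <= g x} ->
  (LpNorm0t p g t <= (C * jbr t `^ A)%:E)%E ->
  (\int[mu]_(x in `[0%R, t]) (g x)%:E <=
    (Num.max C 0 * jbr t `^ (A + inv_conj p))%:E)%E.
Proof.
move=> p_ge1 t_ge0 mg g_ge0 Lp_le.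
apply: le_trans (integral_itv0_le_holder p_ge1 t_ge0 mg g_ge0) _.
apply: le_trans (lee_wpmul2l _ Lp_le) _; first by rewrite lee_fin powR_ge0.
rewrite -EFinM lee_fin.
have J_gt0 : 0 < jbr t := lt_le_trans ltr01 (jbr_ge1 t).
have ic_ge0 : 0 <= inv_conj p by rewrite subr_ge0 invf_le1 // (lt_le_trans ltr01 p_ge1).
have tJ : t `^ inv_conj p <= jbr t `^ inv_conj p.
  rewrite ge0_ler_powR ?nnegrE ?(ltW J_gt0) //.
  exact: le_trans (ler_norm t) (ler_norm_jbr t).
rewrite powRD ?(gt_eqF J_gt0) ?implybT // [leRHS]mulrA [leRHS]mulrC.
apply: (@le_trans _ _ (t `^ inv_conj p * (Num.max C 0 * jbr t `^ A))).
  apply: ler_wpM2l; first exact: powR_ge0.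
  by apply: ler_wpM2r; rewrite ?powR_ge0 ?le_max ?lexx.
by apply: ler_wpM2r => //; rewrite mulr_ge0 ?powR_ge0 // le_max lexx orbT.
Qed.

End HoelderOnInterval.

Section C1Halfline.
Variable R : realType.
Local Notation mu := (@lebesgue_measure R).
Variables f f' : R -> R.
Hypothesis f_C1 : C1_halfline f f'.

Lemma C1_halfline_derivable_oy_Rcontinuous : derivable_oy_Rcontinuous f 0.
Proof.
have [f_der [f_der0 _]] := f_C1; split.
  by move=> x; rewrite in_itv /= andbT => /f_der /(@ex_derive _ _ _ _ _ _ _).
have : f 0 + h * (h^-1 * (f h - f 0)) @[h --> (0:R)^'+] --> f 0 + 0 * f' 0.
  apply: cvgD; first exact: cvg_cst.
  by apply: cvgM => //; exact: cvg_at_right_filter cvg_id.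
rewrite mul0r addr0; apply: cvg_trans; apply: near_eq_cvg; near=> h.
have h_gt0 : 0 < h by near: h; exact: nbhs_right_gt.
by rewrite /= mulrA mulfV ?gt_eqF // mul1r addrC subrK.
Unshelve. all: by end_near.
Qed.

Lemma C1_halfline_sub_le_integral (h : R -> R) (c : R) : 0 < c ->
  measurable_fun `[0, c] h -> {in `[0, c], forall x, 0 <= h x} ->
  {in `[0, c], forall x, f' x <= h x} ->
  ((f c - f 0)%:E <= \int[mu]_(x in `[0%R, c]) (h x)%:E)%E.
Proof.
move=> c_gt0 mh h_ge0 f'_le.
have f_oo : derivable_oo_LRcontinuous f 0 c.
  exact: derivable_oy_continuousWoo c_gt0 (lexx 0) C1_halfline_derivable_oy_Rcontinuous.
have [f_der [_ f'_cont]] := f_C1.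
have f'_cont0c : {within `[0, c], continuous f'}.
  by apply: continuous_subspaceW f'_cont => x /=; rewrite !in_itv /= => /andP[-> _].
have f'E : {in `]0, c[%R, f^`() =1 f'}.
  move=> x; rewrite in_itv /= => /andP[x_gt0 _].
  by rewrite derive1E (@derive_val _ _ _ _ _ _ _ (f_der x x_gt0)).
rewrite EFinB -(continuous_FTC2 c_gt0 f'_cont0c f_oo f'E) integralE.
have mf' : measurable_fun `[0%R, c] f'.
  exact: measurable_realfun.subspace_continuous_measurable_fun.
rewrite -[leRHS]sube0; apply: leeB; last first.
  by apply: integral_ge0 => x _; exact: funeneg_ge0.
apply: ge0_le_integral => //.
- apply: measurable_realfun.measurable_funepos.
  exact/measurable_realfun.measurable_EFinP.
- exact/measurable_realfun.measurable_EFinP.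
- by move=> x x0c; rewrite funeposE ge_max !lee_fin f'_le ?h_ge0 ?inE.
Qed.
End C1Halfline.

Section IntegralInequality.
Variables (R : realType) (m : nat) (lam : 'I_m -> R) (f f' : R -> R).
Variable g : 'I_m -> R -> R.
Local Notation mu := (@lebesgue_measure R).
Hypotheses (lam_itv : forall k, 0 < lam k <= 1) (f_C1 : C1_halfline f f').
Hypothesis f_ge0 : forall t, 0 <= t -> 0 <= f t.
Hypothesis g_meas : forall k, measurable_fun (`[0, +oo[ : set R) (g k).
Hypothesis g_ge0 : forall k t, 0 <= t -> 0 <= g k t.
Hypothesis f'_le :
  forall t, 0 <= t -> f' t <= \sum_(k < m) f t `^ (1 - lam k) * g k t.

Lemma measurable_g_itv0 k t : measurable_fun (`[0, t] : set R) (g k).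
Proof. by apply: measurable_funS (g_meas k) => //; exact: subset_itvl. Qed.

Lemma integral_g_le_ge0 k c (b : R) :
  (\int[mu]_(x in `[0%R, c]) (g k x)%:E <= b%:E)%E -> 0 <= b.
Proof.
rewrite -lee_fin; apply: le_trans; apply: integral_ge0 => x.
by rewrite /= in_itv /= => /andP[x_ge0 _]; rewrite lee_fin g_ge0.
Qed.

Lemma f_le_f0_add_sum_powR (c X : R) (b : 'I_m -> R) : 0 <= c ->
  (forall x, 0 <= x <= c -> f x <= X) ->
  (forall k, (\int[mu]_(x in `[0%R, c]) (g k x)%:E <= (b k)%:E)%E) ->
  f c <= f 0 + \sum_(k < m) X `^ (1 - lam k) * b k.
Proof.
move=> c_ge0 f_le int_le.
have b_ge0 k : 0 <= b k := integral_g_le_ge0 (int_le k).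
move: c_ge0; rewrite le_eqVlt => /predU1P[<-|c_gt0].
  by rewrite lerDl sumr_ge0 // => k _; rewrite mulr_ge0 ?powR_ge0.
have X_ge0 : 0 <= X by apply: le_trans (f_le 0 _); rewrite ?f_ge0 ?lexx ?ltW.
pose h x := \sum_(k < m) X `^ (1 - lam k) * g k x.
have h_ge0 : {in `[0, c], forall x, 0 <= h x}.
  move=> x; rewrite inE /= in_itv /= => /andP[x_ge0 _].
  by rewrite sumr_ge0 // => k _; rewrite mulr_ge0 ?powR_ge0 ?g_ge0.
have f'_le_h : {in `[0, c], forall x, f' x <= h x}.
  move=> x; rewrite inE /= in_itv /= => /andP[x_ge0 x_le].
  apply: le_trans (f'_le x_ge0) _.
  apply: ler_sum => k _; rewrite ler_wpM2r ?g_ge0 //.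
  have /andP[_ lam_le1] := lam_itv k.
  by rewrite ge0_ler_powR ?nnegrE ?subr_ge0 ?f_ge0 ?f_le ?x_ge0.
have mh : measurable_fun `[0, c] h.
  apply: measurable_sum => k; apply: measurable_realfun.measurable_funM => //.
  exact: measurable_g_itv0.
rewrite -lerBlDl -lee_fin.
apply: le_trans (C1_halfline_sub_le_integral f_C1 c_gt0 mh h_ge0 f'_le_h) _.
have g_ge0c k : forall x, `[0%R, c] x -> (0 <= (g k x)%:E)%E.
  by move=> x; rewrite /= in_itv /= => /andP[x_ge0 _]; rewrite lee_fin g_ge0.
under eq_integral do rewrite -sumEFin.
rewrite ge0_integral_sum //; first last.
- by move=> k x /(g_ge0c k); rewrite !lee_fin => gx_ge0; rewrite mulr_ge0 ?powR_ge0.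
- move=> k; apply/measurable_realfun.measurable_EFinP.
  by apply: measurable_realfun.measurable_funM => //; exact: measurable_g_itv0.
rewrite -sumEFin; apply: lee_sum => k _.
under eq_integral do rewrite EFinM.
rewrite ge0_integralZl_EFin ?powR_ge0 //.
- by rewrite EFinM lee_wpmul2l ?lee_fin ?powR_ge0.
- exact: g_ge0c.
- by apply/measurable_realfun.measurable_EFinP; exact: measurable_g_itv0.
Qed.

Lemma f_le_absorb_integral_bound (t : R) (b : 'I_m -> R) : 0 <= t ->
  (forall k, (\int[mu]_(x in `[0%R, t]) (g k x)%:E <= (b k)%:E)%E) ->
  f t <= m.+1%:R * f 0 + \sum_(k < m) (m.+1%:R * b k) `^ (lam k)^-1.
Proof.
move=> t_ge0 int_le.
have f_cont : {within `[0, t], continuous f}.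
  apply: continuous_subspaceW (derivable_oy_Rcontinuous_within_itvcy
    (C1_halfline_derivable_oy_Rcontinuous f_C1)).
  by move=> x /=; rewrite !in_itv /= => /andP[-> _].
have [c c_in f_max] := EVT_max t_ge0 f_cont.
move: c_in; rewrite in_itv /= => /andP[c_ge0 c_le].
have f_le x : 0 <= x <= c -> f x <= f c.
  move=> /andP[x_ge0 x_le]; apply: f_max.
  by rewrite in_itv /= x_ge0 (le_trans x_le c_le).
have int_le_c k : (\int[mu]_(x in `[0%R, c]) (g k x)%:E <= (b k)%:E)%E.
  apply: le_trans (int_le k).
  apply: ge0_subset_integral => //; try exact: measurable_itv.
  - by apply/measurable_realfun.measurable_EFinP; exact: measurable_g_itv0.
  - by move=> x /=; rewrite in_itv /= => /andP[x_ge0 _]; rewrite lee_fin g_ge0.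
  - by move=> x /=; rewrite !in_itv /= => /andP[-> /le_trans]; apply.
have lam_gt0 k : 0 < lam k by have /andP[] := lam_itv k.
apply: le_trans (f_max t _) _; first by rewrite in_itv /= t_ge0 lexx.
apply: ler_sum_powR_absorb => //.
- by move=> k; exact: integral_g_le_ge0 (int_le k).
- exact: f_ge0.
- exact: f_le_f0_add_sum_powR.
Qed.

End IntegralInequality.

Theorem lemma5p4 (R : realType) (m : nat) (lam A p : 'I_m -> R)
  (f f' : R -> R) (g : 'I_m -> R -> R) :
  (0 < m)%N ->
  (forall k, 0 < lam k <= 1) ->
  (forall k, 0 <= A k) ->
  (forall k, 1 <= p k) ->
  C1_halfline f f' ->
  (forall t, 0 <= t -> 0 <= f t) ->
  (forall k, measurable_fun (`[0, +oo[ : set R) (g k)) ->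
  (forall k t, 0 <= t -> (LpNorm0t (p k) (g k) t < +oo)%E) ->
  (forall k t, 0 <= t -> 0 <= g k t) ->
  (forall t, 0 <= t -> f' t <= \sum_(k < m) f t `^ (1 - lam k) * g k t) ->
  (forall k, exists C : R, forall t, 0 <= t ->
      (LpNorm0t (p k) (g k) t <= (C * jbr t `^ A k)%:E)%E) ->
  exists C : R, forall t, 0 <= t ->
    f t <= C * jbr t `^ (\big[Num.max/0]_(k < m) ((A k + inv_conj (p k)) / lam k)).
Proof.
move=> _ lam_itv _ p_ge1 f_C1 f_ge0 g_meas _ g_ge0 f'_le Lp_bound.
have [C Lp_le] := boolp.choice Lp_bound.
exists (m.+1%:R * f 0 + \sum_(k < m) (m.+1%:R * Num.max (C k) 0) `^ (lam k)^-1).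
move=> t t_ge0.
have int_le k : (\int[lebesgue_measure]_(x in `[0%R, t]) (g k x)%:E <=
    (Num.max (C k) 0 * jbr t `^ (A k + inv_conj (p k)))%:E)%E.
  apply: integral_itv0_le_jbr_powR (p_ge1 k) t_ge0 _ _ (Lp_le k t t_ge0).
    exact: measurable_g_itv0.
  by move=> x; rewrite inE /= in_itv /= => /andP[x_ge0 _]; exact: g_ge0.
have := f_le_absorb_integral_bound lam_itv f_C1 f_ge0 g_meas g_ge0 f'_le t_ge0 int_le.
move/le_trans; apply.
rewrite mulrDl mulr_suml lerD //.
  rewrite ler_peMr ?mulr_ge0 ?f_ge0 // -(powRr0 (jbr t)) ler_powR ?jbr_ge1 //.
  exact: bigmax_ge_id.
apply: ler_sum => k _; rewrite mulrA; apply: powR_mul_le_powR; rewrite ?jbr_ge1 //.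
- by rewrite mulr_ge0 ?le_max ?lexx ?orbT.
- by have /andP[] := lam_itv k.
- exact: le_bigmax.
Qed.
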